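(* Let $W_1,W_2,W_3$ be generalized modules for a Möbius vertex algebra $V$ and let $\mathcal Y$ be a logarithmic intertwining operator of type $\binom{W_3}{W_1W_2}$. For $\mu\in\mathbb C/\mathbb Z$ and $t\in\mathbb N$ define $\mathcal X^\mu_t:W_1\otimes W_2\to W_3[\log x]\{x\}$ by $$\mathcal X^\mu_t(w_{(1)},x)w_{(2)}=\sum_{k\in\mathbb N}\binom{k+t}{t}\sum_{n\in\mathbb C,\ \bar n=\mu}w_{(1)}{}^{\mathcal Y}_{n;k+t}w_{(2)}x^{-n-1}(\log x)^k,$$ where $\bar n$ is the class of $n$ in $\mathbb C/\mathbb Z$, and $\mathcal X_t$ by the same formula with the sum over all $n\in\mathbb C$. Then each $\mathcal X^\mu_t$ and each $\mathcal X_t$ is a logarithmic intertwining operator of type $\binom{W_3}{W_1W_2}$. If $V,W_1,W_2,W_3$ are strongly graded and $\mathcal Y$ is grading-compatible, then so are $\mathcal X^\mu_t$ and $\mathcal X_t$.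
   Context: Formal calculus: $x,x_0,x_1,x_2$ and $\log x$ are commuting independent formal variables; $\delta(x)=\sum_{n\in\mathbb Z}x^n$; binomial expressions are expanded in nonnegative integral powers of the second summand. A Möbius vertex algebra is a $\mathbb Z$-graded $V=\coprod V_{(n)}$ with $Y(u,x)=\sum_nu_nx^{-n-1}$, vacuum $\mathbf 1$, and an $\mathfrak{sl}(2)$-action $L(-1),L(0),L(1)$ satisfying: lower truncation, vacuum and creation properties, the Jacobi identity, $[L(j),Y(v,x)]=\sum_{k=0}^{j+1}\binom{j+1}kx^kY(L(j-k)v,x)$ for $j=0,\pm1$, the $L(-1)$-derivative property, and $L(0)=n$ on $V_{(n)}$. A generalized $V$-module is $W=\coprod_{n\in\mathbb C}W_{[n]}$ with $Y_W$ and an $\mathfrak{sl}(2)$-action satisfying the analogous axioms, $W_{[n]}$ being the generalized $L(0)$-eigenspace for eigenvalue $n$. A logarithmic intertwining operator of type $\binom{W_3}{W_1W_2}$ is a linear map $w_{(1)}\otimes w_{(2)}\mapsto\mathcal Y(w_{(1)},x)w_{(2)}=\sum_{n\in\mathbb C}\sum_{k\in\mathbb N}w_{(1)}{}^{\mathcal Y}_{n;k}w_{(2)}x^{-n-1}(\log x)^k\in W_3[\log x]\{x\}$ (each coefficient of a power of $x$ a polynomial in $\log x$) such that: $w_{(1)}{}^{\mathcal Y}_{n+m;k}w_{(2)}=0$ for $m\in\mathbb N$ sufficiently large independently of $k$; the Jacobi identity $x_0^{-1}\delta(\frac{x_1-x_2}{x_0})Y_3(v,x_1)\mathcal Y(w_{(1)},x_2)w_{(2)}-x_0^{-1}\delta(\frac{x_2-x_1}{-x_0})\mathcal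 Y(w_{(1)},x_2)Y_2(v,x_1)w_{(2)}=x_2^{-1}\delta(\frac{x_1-x_0}{x_2})\mathcal Y(Y_1(v,x_0)w_{(1)},x_2)w_{(2)}$; $\mathcal Y(L(-1)w_{(1)},x)=\frac d{dx}\mathcal Y(w_{(1)},x)$ with $\frac d{dx}(x^n(\log x)^k)=nx^{n-1}(\log x)^k+kx^{n-1}(\log x)^{k-1}$; $[L(j),\mathcal Y(w_{(1)},x)]=\sum_{i=0}^{j+1}\binom{j+1}ix^i\mathcal Y(L(j-i)w_{(1)},x)$ for $j=0,\pm1$. Strong gradedness: $V=\coprod_{\alpha\in A}V^{(\alpha)}$ and $W_i=\coprod_{\beta\in\tilde A}W_i^{(\beta)}$ ($A\subset\tilde A$ abelian groups) compatible with the weight gradings, with finiteness conditions ($V^{(\alpha)}_{(n)}$, $W^{(\beta)}_{[n]}$ finite-dimensional; $V^{(\alpha)}_{(n)}=0$ for $n$ sufficiently negative; $W^{(\beta)}_{[n+k]}=0$ for $k\in\mathbb Z$ sufficiently negative), $\mathbf 1\in V^{(0)}$, $v_lW^{(\beta)}\subset W^{(\alpha+\beta)}$ for $v\in V^{(\alpha)}$, and $L(j)$ preserving the $A$- and $\tilde A$-gradings. $\mathcal Y$ is grading-compatible if $w_{(1)}{}^{\mathcal Y}_{n;k}w_{(2)}\in W_3^{(\beta+\gamma)}$ for $w_{(1)}\in W_1^{(\beta)}$, $w_{(2)}\in W_2^{(\gamma)}$. *)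

From HB Require Import structures.
From Stdlib Require Import ClassicalEpsilon.
From mathcomp Require Import all_boot all_order all_algebra.
From mathcomp Require Import complex.
From mathcomp Require Import Rstruct.

Set Implicit Arguments.
Unset Strict Implicit.
Unset Printing Implicit Defensive.

Import Order.TTheory GRing.Theory Num.Theory.
Local Open Scope ring_scope.

Notation C := (complex Rdefinitions.R).

Definition is_lin {U W : lmodType C} (f : U -> W) : Prop :=
  forall (a : C) (u v : U), f (a *: u + v) = a *: f u + f v.

Definition binomz (l : int) (i : nat) : C :=
  (\prod_(j < i) (l%:~R - (j : nat)%:R)) / (i`!)%:R.

Definition fin_sum_eq {W : zmodType} (f g : nat -> W) : Prop :=
  exists N : nat, (forall i, (N <= i)%N -> f i = 0 /\ g i = 0) /\
    \sum_(i < N) f i = \sum_(i < N) g i.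

Definition gen_eig {W : lmodType C} (L0 : W -> W) (n : C) (w : W) : Prop :=
  exists N : nat, iter N (fun u => L0 u - n *: u) w = 0.

Definition fin_dim {W : lmodType C} (P : W -> Prop) : Prop :=
  exists s : seq W, forall w, P w ->
    exists c : nat -> C, w = \sum_(i < size s) c i *: s`_i.

Definition subspace {W : lmodType C} (P : W -> Prop) : Prop :=
  P 0 /\ forall (a : C) u v, P u -> P v -> P (a *: u + v).

Definition direct_sum {I : eqType} {W : lmodType C}
  (D : I -> W -> Prop) (idx : I -> Prop) : Prop :=
  [/\ forall i, subspace (D i),
      forall i, ~ idx i -> forall w, D i w -> w = 0,
      forall w, exists s : seq (I * W),
        w = \sum_(x <- s) x.2 /\ forall x, x \in s -> idx x.1 /\ D x.1 x.2 &
      forall s : seq (I * W), uniq (map fst s) ->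
        (forall x, x \in s -> D x.1 x.2) -> \sum_(x <- s) x.2 = 0 ->
        forall x, x \in s -> x.2 = 0].

Record sl2 (W : lmodType C) := SL2 { Lm1 : W -> W; L0 : W -> W; L1 : W -> W }.

(* L(j) for j = -1, 0, 1 (junk value 0 otherwise; never used) *)
Definition Lj {W : lmodType C} (s : sl2 W) (j : int) : W -> W :=
  if j == -1 then Lm1 s else if j == 0 then L0 s else if j == 1 then L1 s
  else (fun _ => 0).

(* [L(m), L(n)] = (m - n) L(m + n) *)
Definition sl2_rep {W : lmodType C} (s : sl2 W) : Prop :=
  [/\ is_lin (Lm1 s) /\ is_lin (L0 s) /\ is_lin (L1 s),
      forall w, L0 s (Lm1 s w) - Lm1 s (L0 s w) = Lm1 s w,
      forall w, L0 s (L1 s w) - L1 s (L0 s w) = - L1 s w &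
      forall w, L1 s (Lm1 s w) - Lm1 s (L1 s w) = 2%:R *: L0 s w].

(* Vertex operators  Y(v,x) = sum_m v_m x^{-m-1}:  Y v m = v_m          *)
(* All formal-calculus axioms are stated in component form, i.e. as the *)
(* identities between coefficients of the monomials that the formal     *)
(* series identities literally amount to.                               *)

Section VertexOps.
Variables (V W : lmodType C).
Implicit Types (YV : V -> int -> V -> V) (YW : V -> int -> W -> W).

Definition vo_bilinear YW : Prop :=
  (forall m w, is_lin (fun v => YW v m w)) /\ (forall v m, is_lin (YW v m)).

Definition vo_truncation YW : Prop :=
  forall v w, exists M : int, forall m : int, M <= m -> YW v m w = 0.

Definition vo_vacuum (one : V) YW : Prop :=
  forall (m : int) w, YW one m w = if m == -1 then w else 0.

(* Jacobi identity: coefficient of x0^{-l-1} x1^{-p-1} x2^{-q-1} *)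
Definition vo_jacobi YV YW : Prop :=
  forall (v u : V) (w : W) (l p q : int),
    fin_sum_eq
      (fun i => ((-1) ^+ i * binomz l i) *:
         (YW v (l + p - i%:Z) (YW u (q + i%:Z) w)
          - (-1) ^ l *: YW u (l + q - i%:Z) (YW v (p + i%:Z) w)))
      (fun i => binomz p i *: YW (YV v (l + i%:Z) u) (p + q - i%:Z) w).

(* [L(j), Y(v,x)] = sum_{k=0}^{j+1} binom(j+1,k) x^k Y(L(j-k)v, x) *)
Definition vo_Lbracket (sV : sl2 V) (sW : sl2 W) YW : Prop :=
  forall j : int, -1 <= j <= 1 -> forall v (m : int) w,
    Lj sW j (YW v m w) - YW v m (Lj sW j w)
    = \sum_(k < (absz (j + 1)).+1)
        ('C(absz (j + 1), k))%:R *: YW (Lj sV (j - k%:Z) v) (m + k%:Z) w.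

(* Y(L(-1)v, x) = d/dx Y(v, x) *)
Definition vo_Lderiv (sV : sl2 V) YW : Prop :=
  forall v (m : int) w, YW (Lm1 sV v) m w = - (m%:~R) *: YW v (m - 1) w.

End VertexOps.

(* V = coprod_{n in Z} V_(n) with L(0) = n on V_(n) *)
Definition Z_graded_by {V : lmodType C} (L0V : V -> V) : Prop :=
  forall v, exists s : seq (int * V), v = \sum_(x <- s) x.2 /\
    forall x, x \in s -> L0V x.2 = x.1%:~R *: x.2.

(* W = coprod_{n in C} W_[n], W_[n] the generalized L(0)-eigenspace *)
Definition C_graded_by {W : lmodType C} (L0W : W -> W) : Prop :=
  forall w, exists s : seq (C * W), w = \sum_(x <- s) x.2 /\
    forall x, x \in s -> gen_eig L0W x.1 x.2.

Definition mobius_VA {V : lmodType C} (YV : V -> int -> V -> V) (one : V)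
  (sV : sl2 V) : Prop :=
  [/\ Z_graded_by (L0 sV) /\ sl2_rep sV, vo_bilinear YV /\ vo_truncation YV,
      vo_vacuum one YV /\
      ((forall v (m : int), 0 <= m -> YV v m one = 0) /\
        (forall v, YV v (-1) one = v)),
      vo_jacobi YV YV &
      vo_Lbracket sV sV YV /\ vo_Lderiv sV YV].

Definition gen_module {V W : lmodType C} (YV : V -> int -> V -> V) (one : V)
  (sV : sl2 V) (YW : V -> int -> W -> W) (sW : sl2 W) : Prop :=
  [/\ C_graded_by (L0 sW) /\ sl2_rep sW, vo_bilinear YW /\ vo_truncation YW,
      vo_vacuum one YW, vo_jacobi YV YW &
      vo_Lbracket sV sW YW /\ vo_Lderiv sV YW].

(* Yc w1 n k w2 = w1^Y_{n;k} w2, the coefficient of x^{-n-1}(log x)^k.   *)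

Definition log_intw {V W1 W2 W3 : lmodType C} (sV : sl2 V)
  (Y1 : V -> int -> W1 -> W1) (s1 : sl2 W1)
  (Y2 : V -> int -> W2 -> W2) (s2 : sl2 W2)
  (Y3 : V -> int -> W3 -> W3) (s3 : sl2 W3)
  (Yc : W1 -> C -> nat -> W2 -> W3) : Prop :=
  [/\ (* linear map W1 (x) W2 -> W3[log x]{x} *)
      ((forall n k w2, is_lin (fun w1 => Yc w1 n k w2)) /\
        (forall w1 n k, is_lin (Yc w1 n k))) /\
      (* each coefficient of a power of x is a polynomial in log x *)
      (forall w1 w2 n, exists K : nat, forall k, (K <= k)%N -> Yc w1 n k w2 = 0),
      (forall w1 w2 n, exists M : nat, forall m k, (M <= m)%N ->
          Yc w1 (n + m%:R) k w2 = 0),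
      (* Jacobi identity: coefficient of
         x0^{-l-1} x1^{-p-1} x2^{-q-1} (log x2)^k *)
      (forall (v : V) w1 w2 (l p : int) (q : C) (k : nat),
        fin_sum_eq
          (fun i => ((-1) ^+ i * binomz l i) *:
             (Y3 v (l + p - i%:Z) (Yc w1 (q + i%:R) k w2)
              - (-1) ^ l *: Yc w1 (l%:~R + q - i%:R) k (Y2 v (p + i%:Z) w2)))
          (fun i => binomz p i *: Yc (Y1 v (l + i%:Z) w1) (p%:~R + q - i%:R) k w2)),
      (* L(-1)-derivative property: coefficient of x^{-m-1}(log x)^k *)
      (forall w1 w2 (m : C) (k : nat),
        Yc (Lm1 s1 w1) m k w2
        = - m *: Yc w1 (m - 1) k w2 + (k.+1)%:R *: Yc w1 (m - 1) k.+1 w2) &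
      (* [L(j), Y(w1,x)] = sum_i binom(j+1,i) x^i Y(L(j-i)w1, x) *)
      (forall j : int, -1 <= j <= 1 -> forall w1 w2 (m : C) (k : nat),
        Lj s3 j (Yc w1 m k w2) - Yc w1 m k (Lj s2 j w2)
        = \sum_(i < (absz (j + 1)).+1)
            ('C(absz (j + 1), i))%:R *: Yc (Lj s1 (j - i%:Z) w1) (m + i%:R) k w2)].

(* n lies in the class mu = c + Z of C/Z *)
Definition in_class (c n : C) : Prop := exists z : int, n = c + z%:~R.

Definition Xmu {W1 W2 W3 : lmodType C} (c : C) (t : nat)
  (Yc : W1 -> C -> nat -> W2 -> W3) : W1 -> C -> nat -> W2 -> W3 :=
  fun w1 n k w2 =>
    if excluded_middle_informative (in_class c n)
    then ('C(k + t, t))%:R *: Yc w1 n (k + t)%N w2 else 0.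

Definition Xall {W1 W2 W3 : lmodType C} (t : nat)
  (Yc : W1 -> C -> nat -> W2 -> W3) : W1 -> C -> nat -> W2 -> W3 :=
  fun w1 n k w2 => ('C(k + t, t))%:R *: Yc w1 n (k + t)%N w2.

Definition subgroup {At : zmodType} (A : At -> Prop) : Prop :=
  A 0 /\ forall a b, A a -> A b -> A (a - b).

(* V strongly graded w.r.t. the subgroup A of At; gV a = V^(a) *)
Definition strongly_graded_VA {V : lmodType C} {At : zmodType}
  (YV : V -> int -> V -> V) (one : V) (sV : sl2 V)
  (A : At -> Prop) (gV : At -> V -> Prop) : Prop :=
  [/\ subgroup A /\ direct_sum gV A,
      (forall v, exists s : seq ((At * int) * V), v = \sum_(x <- s) x.2 /\
         forall x, x \in s -> gV x.1.1 x.2 /\ L0 sV x.2 = x.1.2%:~R *: x.2),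
      (forall a (n : int), fin_dim (fun v => gV a v /\ L0 sV v = n%:~R *: v)),
      (forall a, exists N : int, forall n : int, n < N ->
         forall v, gV a v -> L0 sV v = n%:~R *: v -> v = 0) /\
      gV 0 one &
      (forall a b v u (m : int), gV a v -> gV b u -> gV (a + b) (YV v m u)) /\
      (forall a v, gV a v -> [/\ gV a (Lm1 sV v), gV a (L0 sV v) & gV a (L1 sV v)])].

(* W strongly graded w.r.t. At; gW b = W^(b) *)
Definition strongly_graded_mod {V W : lmodType C} {At : zmodType}
  (gV : At -> V -> Prop) (YW : V -> int -> W -> W) (sW : sl2 W)
  (gW : At -> W -> Prop) : Prop :=
  [/\ direct_sum gW (fun _ => True) /\
      (forall w, exists s : seq ((At * C) * W), w = \sum_(x <- s) x.2 /\
         forall x, x \in s -> gW x.1.1 x.2 /\ gen_eig (L0 sW) x.1.2 x.2),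
      (forall b (n : C), fin_dim (fun w => gW b w /\ gen_eig (L0 sW) n w)),
      (forall b (n : C), exists K : int, forall k : int, k < K ->
         forall w, gW b w -> gen_eig (L0 sW) (n + k%:~R) w -> w = 0),
      (forall a b v w (m : int), gV a v -> gW b w -> gW (a + b) (YW v m w)) &
      (forall b w, gW b w -> [/\ gW b (Lm1 sW w), gW b (L0 sW w) & gW b (L1 sW w)])].

Definition grading_compatible {W1 W2 W3 : lmodType C} {At : zmodType}
  (g1 : At -> W1 -> Prop) (g2 : At -> W2 -> Prop) (g3 : At -> W3 -> Prop)
  (Yc : W1 -> C -> nat -> W2 -> W3) : Prop :=
  forall b c w1 w2 (n : C) (k : nat), g1 b w1 -> g2 c w2 -> g3 (b + c) (Yc w1 n k w2).

(* In component form every axiom of a logarithmic intertwining operator is a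
   linear identity among coefficients whose log-exponents agree and whose
   x-exponents lie in one coset of Z in C.  Shifting the log-exponent by t and
   rescaling by binom(k+t, t) therefore preserves every axiom except possibly
   the L(-1)-derivative property, which mixes k and k+1; there the rescaling
   matches because binom(k+t,t)(k+t+1) = (k+1) binom(k+1+t,t).  Restricting to
   one coset mu preserves every axiom, since each identity lies entirely inside
   or entirely outside mu.  Both operations scale or kill coefficients, so they
   keep them in the graded pieces W3^(b+c). *)

From HB Require Import structures.
From mathcomp Require Import all_boot all_order all_algebra.
From mathcomp Require Import complex Rstruct.
From mathcomp Require Import zify ring.
From Stdlib Require Import ClassicalEpsilon.
Import GRing.Theory Num.Theory.
Set Implicit Arguments.
Unset Strict Implicit.
Local Open Scope ring_scope.

Lemma int_between_m1_1 (j : int) : -1 <= j <= 1 -> j = -1 \/ j = 0 \/ j = 1.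
Proof. by move=> ?; lia. Qed.

Section LinearMaps.
Variables (U W : lmodType C) (f : U -> W).
Hypothesis f_lin : is_lin f.

Lemma is_lin0 : f 0 = 0.
Proof. by apply: (@addrI _ (f 0)); have := f_lin 1 0 0; rewrite !scale1r !addr0. Qed.

Lemma is_linZ a u : f (a *: u) = a *: f u.
Proof. by rewrite -[a *: u]addr0 f_lin is_lin0 addr0. Qed.

End LinearMaps.

Lemma Lj_is_lin (W : lmodType C) (s : sl2 W) (j : int) :
  sl2_rep s -> -1 <= j <= 1 -> is_lin (Lj s j).
Proof. by case=> [[? [? ?]] _ _ _] /int_between_m1_1 [->|[->|->]]. Qed.

Lemma subspace0 (W : lmodType C) (P : W -> Prop) : subspace P -> P 0.
Proof. by case. Qed.

Lemma subspaceZ (W : lmodType C) (P : W -> Prop) a w : subspace P -> P w -> P (a *: w).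
Proof. by move=> [P0 PD] Pw; rewrite -[a *: w]addr0; apply: PD. Qed.

Section FinSumEq.
Variable W : lmodType C.
Implicit Types f g : nat -> W.

Lemma eq_fin_sum_eq f g f' g' :
  f =1 f' -> g =1 g' -> fin_sum_eq f g -> fin_sum_eq f' g'.
Proof.
move=> ef eg [N [fin sumE]]; exists N; split=> [i /fin|]; first by rewrite ef eg.
by rewrite -(eq_bigr _ (fun (i : 'I_N) _ => ef i)) -(eq_bigr _ (fun (i : 'I_N) _ => eg i)).
Qed.

Lemma fin_sum_eqZ a f g :
  fin_sum_eq f g -> fin_sum_eq (fun i => a *: f i) (fun i => a *: g i).
Proof.
move=> [N [fin sumE]]; exists N; split; last by rewrite -!scaler_sumr sumE.
by move=> i /fin [-> ->]; rewrite scaler0.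
Qed.

Lemma fin_sum_eq00 : fin_sum_eq (fun _ => 0 : W) (fun _ => 0).
Proof. by exists 0%N. Qed.

End FinSumEq.

Lemma mul_bin_add_succ (k t : nat) :
  ('C(k + t, t) * (k + t).+1 = k.+1 * 'C(k.+1 + t, t))%N.
Proof. by rewrite mulnC addSn (mul_bin_down (k + t).+1 t) /=; lia. Qed.

Definition mask (W1 W2 W3 : lmodType C) (P : C -> Prop)
  (Y : W1 -> C -> nat -> W2 -> W3) : W1 -> C -> nat -> W2 -> W3 :=
  fun w1 n k w2 => if excluded_middle_informative (P n) then Y w1 n k w2 else 0.

Lemma Xmu_mask (W1 W2 W3 : lmodType C) c t (Yc : W1 -> C -> nat -> W2 -> W3) :
  Xmu c t Yc = mask (in_class c) (Xall t Yc).
Proof. by []. Qed.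

Lemma in_class_addz (c n : C) (z : int) : in_class c (n + z%:~R) <-> in_class c n.
Proof.
split=> -[z' e].
  by exists (z' - z); rewrite intrB addrA -e addrK.
by exists (z' + z); rewrite intrD addrA e.
Qed.

Section IntertwiningOperators.
Variables (V W1 W2 W3 : lmodType C) (sV : sl2 V).
Variables (Y1 : V -> int -> W1 -> W1) (s1 : sl2 W1).
Variables (Y2 : V -> int -> W2 -> W2) (s2 : sl2 W2).
Variables (Y3 : V -> int -> W3 -> W3) (s3 : sl2 W3).
Hypothesis Y3_lin : forall v m, is_lin (Y3 v m).
Hypothesis s3_rep : sl2_rep s3.
Implicit Type Yc : W1 -> C -> nat -> W2 -> W3.

Lemma Xall_log_intw Yc t :
  log_intw sV Y1 s1 Y2 s2 Y3 s3 Yc -> log_intw sV Y1 s1 Y2 s2 Y3 s3 (Xall t Yc).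
Proof.
rewrite /Xall => -[[[lin1 lin2] logfin] trunc jacobi deriv bracket]; split.
- split; first split=> [n k w2 a u v|w1 n k a u v].
  + by rewrite (lin1 _ _ _ a u v) scalerDr !scalerA mulrC.
  + by rewrite lin2 scalerDr !scalerA mulrC.
  move=> w1 w2 n; have [K YK] := logfin w1 w2 n; exists K => k leKk.
  by rewrite YK ?scaler0 // (leq_trans leKk) ?leq_addr.
- move=> w1 w2 n; have [M YM] := trunc w1 w2 n; exists M => m k leMm.
  by rewrite YM ?scaler0.
- move=> v w1 w2 l p q k.
  apply: eq_fin_sum_eq (fin_sum_eqZ ('C(k + t, t))%:R (jacobi v w1 w2 l p q (k + t)%N))
    => i /=; last by rewrite !scalerA mulrC.
  rewrite is_linZ // !scalerBr !scalerA.
  by congr (_ *: _ - _ *: _); ring.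
- move=> w1 w2 m k; rewrite deriv scalerDr !scalerA addSn.
  by rewrite -!natrM mul_bin_add_succ natrM; congr (_ *: _ + _ *: _); ring.
- move=> j j_range w1 w2 m k.
  rewrite (is_linZ (Lj_is_lin s3_rep j_range)) -scalerBr bracket // scaler_sumr.
  by apply: eq_bigr => i _; rewrite !scalerA mulrC.
Qed.

Variable P : C -> Prop.
Hypothesis P_addz : forall n (z : int), P (n + z%:~R) <-> P n.

Let P_addn n (i : nat) : P (n + i%:R) <-> P n.
Proof. exact: (P_addz n i). Qed.

Let P_subn n (l : int) (i : nat) : P (l%:~R + n - i%:R) <-> P n.
Proof. by have := P_addz n (l - i%:Z); rewrite intrB addrA [n + _]addrC. Qed.

Let P_sub1 n : P (n - 1) <-> P n.
Proof. exact: (P_addz n (-1)). Qed.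

Let mask_in Yc w1 n k w2 : P n -> mask P Yc w1 n k w2 = Yc w1 n k w2.
Proof. by rewrite /mask; case: excluded_middle_informative. Qed.

Let mask_out Yc w1 n k w2 : ~ P n -> mask P Yc w1 n k w2 = 0.
Proof. by rewrite /mask; case: excluded_middle_informative. Qed.

Lemma mask_log_intw Yc :
  log_intw sV Y1 s1 Y2 s2 Y3 s3 Yc -> log_intw sV Y1 s1 Y2 s2 Y3 s3 (mask P Yc).
Proof.
move=> [[[lin1 lin2] logfin] trunc jacobi deriv bracket]; split.
- split; last first.
    move=> w1 w2 n; have [K YK] := logfin w1 w2 n; exists K => k leKk.
    by rewrite /mask; case: excluded_middle_informative => // Pn; rewrite YK.
  split=> [n k w2 a u v|w1 n k a u v]; rewrite /mask;
    case: excluded_middle_informative => Pn /=; rewrite ?scaler0 ?addr0 ?lin2 //.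
  exact: lin1.
- move=> w1 w2 n; have [M YM] := trunc w1 w2 n; exists M => m k leMm.
  by rewrite /mask; case: excluded_middle_informative => // Pn; rewrite YM.
- move=> v w1 w2 l p q k; case: (excluded_middle_informative (P q)) => [Pq|nPq].
    by apply: eq_fin_sum_eq (jacobi v w1 w2 l p q k) => i; rewrite !mask_in ?P_addn ?P_subn.
  apply: eq_fin_sum_eq (fin_sum_eq00 W3) => i;
    by rewrite !mask_out ?P_addn ?P_subn ?(is_lin0 (Y3_lin _ _)) ?scaler0 ?subr0 ?scaler0.
- move=> w1 w2 m k; case: (excluded_middle_informative (P m)) => [Pm|nPm].
    by rewrite !mask_in ?P_sub1.
  by rewrite !mask_out ?P_sub1 // !scaler0 addr0.
- move=> j j_range w1 w2 m k; case: (excluded_middle_informative (P m)) => [Pm|nPm].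
    rewrite !mask_in // bracket //; apply: eq_bigr => i _.
    by rewrite mask_in ?P_addn.
  rewrite !mask_out // (is_lin0 (Lj_is_lin s3_rep j_range)) subr0 big1 // => i _.
  by rewrite mask_out ?scaler0 ?P_addn.
Qed.

End IntertwiningOperators.

Section GradingCompatibility.
Variables (At : zmodType) (W1 W2 W3 : lmodType C).
Variables (g1 : At -> W1 -> Prop) (g2 : At -> W2 -> Prop) (g3 : At -> W3 -> Prop).
Hypothesis g3_subspace : forall b, subspace (g3 b).
Variable Yc : W1 -> C -> nat -> W2 -> W3.
Hypothesis Yc_graded : grading_compatible g1 g2 g3 Yc.

Lemma Xall_grading_compatible t : grading_compatible g1 g2 g3 (Xall t Yc).
Proof.
move=> b c w1 w2 n k g1w1 g2w2; rewrite /Xall.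
exact: subspaceZ (g3_subspace _) (@Yc_graded b c w1 w2 n (k + t)%N g1w1 g2w2).
Qed.

Lemma Xmu_grading_compatible mu t : grading_compatible g1 g2 g3 (Xmu mu t Yc).
Proof.
move=> b c w1 w2 n k g1w1 g2w2; rewrite Xmu_mask /mask.
case: excluded_middle_informative => Pn; last exact: subspace0.
exact: Xall_grading_compatible.
Qed.

End GradingCompatibility.

Unset Implicit Arguments.

Theorem proposition3p29
  (V W1 W2 W3 : lmodType C)
  (YV : V -> int -> V -> V) (one : V) (sV : sl2 V)
  (Y1 : V -> int -> W1 -> W1) (s1 : sl2 W1)
  (Y2 : V -> int -> W2 -> W2) (s2 : sl2 W2)
  (Y3 : V -> int -> W3 -> W3) (s3 : sl2 W3)
  (Yc : W1 -> C -> nat -> W2 -> W3) :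
  mobius_VA YV one sV ->
  gen_module YV one sV Y1 s1 ->
  gen_module YV one sV Y2 s2 ->
  gen_module YV one sV Y3 s3 ->
  log_intw sV Y1 s1 Y2 s2 Y3 s3 Yc ->
  [/\ (forall (mu : C) (t : nat), log_intw sV Y1 s1 Y2 s2 Y3 s3 (Xmu mu t Yc)),
      (forall t : nat, log_intw sV Y1 s1 Y2 s2 Y3 s3 (Xall t Yc)) &
      (forall (At : zmodType) (A : At -> Prop) (gV : At -> V -> Prop)
              (g1 : At -> W1 -> Prop) (g2 : At -> W2 -> Prop) (g3 : At -> W3 -> Prop),
         strongly_graded_VA YV one sV A gV ->
         strongly_graded_mod gV Y1 s1 g1 ->
         strongly_graded_mod gV Y2 s2 g2 ->
         strongly_graded_mod gV Y3 s3 g3 ->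
         grading_compatible g1 g2 g3 Yc ->
         (forall (mu : C) (t : nat), grading_compatible g1 g2 g3 (Xmu mu t Yc)) /\
         (forall t : nat, grading_compatible g1 g2 g3 (Xall t Yc)))].
Proof.
move=> _ _ _ [[_ s3_rep] [[_ Y3_lin] _] _ _ _] Yc_intw.
have Xall_intw t := Xall_log_intw Y3_lin s3_rep t Yc_intw.
split=> // [mu t|At A gV g1 g2 g3 _ _ _ [[[g3_subspace _ _ _] _] _ _ _ _] Yc_graded].
  by rewrite Xmu_mask; exact (mask_log_intw Y3_lin s3_rep (@in_class_addz mu) (Xall_intw t)).
split=> [mu t|t].
  exact: Xmu_grading_compatible.
exact: Xall_grading_compatible.
Qed.
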